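(* Let $\overline{\mathcal{O}}=\prod_t\overline{\mathcal{O}}_t$ and $\varphi$ be as in the context, let $K$ be any complete non-Archimedean field and let $\mathbf{\Gamma}:\overline{\mathcal{O}}\to K$ be a continuous non-vanishing function. Then $H:\overline{\mathcal{O}}\to K$ is a continuous non-vanishing function satisfying, for all $n\in\mathbb{N}$ and all $\mathbf{x}\in\overline{\mathcal{O}}$ with $\varphi^{(n)}(-\mathbf{x})=-\mathbf{x}$, $$\prod_{j=0}^{n-1}\mathbf{\Gamma}\left(-\varphi^{(j)}(-\mathbf{x})\right)=\prod_{j=0}^{n-1}H\left(-\varphi^{(j)}(-\mathbf{x})\right),$$ if and only if there exists a continuous non-vanishing function $G:\overline{\mathcal{O}}\to K$ such that $H(\mathbf{x})=\mathbf{\Gamma}(\mathbf{x})\cdot\dfrac{G(\mathbf{x})}{G(-\varphi(-\mathbf{x}))}$ for all $\mathbf{x}\in\overline{\mathcal{O}}$.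
   Context: $\overline{\mathcal{O}}$ is a direct product of finitely many rings $\overline{\mathcal{O}}_t$, each the ring of integers of a non-Archimedean local field with a fixed uniformizer. For each $t$, $\pi_t\in\overline{\mathcal{O}}_t$ is a fixed positive power of that uniformizer and $S_t\subseteq\overline{\mathcal{O}}_t$ a fixed complete set of representatives of $\overline{\mathcal{O}}_t/(\pi_t)$. Each $\mathbf{x}_t\in\overline{\mathcal{O}}_t$ is written uniquely as $\sum_{i\ge0}x_{t,i}\pi_t^i$ with $x_{t,i}\in S_t$; define $\varphi_t(\mathbf{x}_t)=\sum_{i\ge0}x_{t,i+1}\pi_t^i$ and $\varphi(\mathbf{x})=(\varphi_t(\mathbf{x}_t))_t$ for $\mathbf{x}=(\mathbf{x}_t)_t$; $\varphi^{(j)}$ denotes the $j$-fold iterate. *)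

From HB Require Import structures.
From mathcomp Require Import all_boot all_order all_algebra.
From mathcomp Require Import reals.
From Stdlib Require Import ClassicalEpsilon.
Set Implicit Arguments. Unset Strict Implicit. Unset Printing Implicit Defensive.
Import Order.TTheory GRing.Theory Num.Theory.
Local Open Scope ring_scope.

Definition dvdR {R : comRingType} (a b : R) : Prop := exists c : R, b = c * a.

(* The ring of integers of a non-Archimedean local field, together with a
   fixed uniformizer [unif]: a complete discrete valuation ring with finite
   residue field. *)
Record localInt := LocalInt {
  lcarrier :> idomainType;
  unif : lcarrier;
  unif_neq0 : unif != 0;
  unif_nonunit : unif \isn't a GRing.unit;
  unif_dvr : forall x : lcarrier, x != 0 ->
     exists u : lcarrier, exists k : nat, u \is a GRing.unit /\ x = u * unif ^+ k;
  residue_finite : exists s : seq lcarrier,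
     forall x : lcarrier, exists2 a, a \in s & dvdR unif (x - a);
  unif_complete : forall u : nat -> lcarrier,
     (forall n : nat, exists N : nat, forall m : nat, (N <= m)%N ->
         dvdR (unif ^+ n) (u m - u N)) ->
     exists l : lcarrier, forall n : nat, exists N : nat, forall m : nat,
         (N <= m)%N -> dvdR (unif ^+ n) (u m - l)
}.

Record naField (R : realType) := NAField {
  kcarrier :> fieldType;
  kabs : kcarrier -> R;
  kabs_ge0 : forall x, 0 <= kabs x;
  kabs_eq0 : forall x, kabs x = 0 <-> x = 0;
  kabsM : forall x y, kabs (x * y) = kabs x * kabs y;
  kabs_ultra : forall x y, kabs (x + y) <= Num.max (kabs x) (kabs y);
  kcomplete : forall u : nat -> kcarrier,
     (forall e : R, 0 < e -> exists N : nat, forall m n : nat,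
         (N <= m)%N -> (N <= n)%N -> kabs (u m - u n) < e) ->
     exists l : kcarrier, forall e : R, 0 < e -> exists N : nat, forall m : nat,
         (N <= m)%N -> kabs (u m - l) < e
}.

Definition expansion (O : localInt) (pi : O) (S : O -> Prop)
    (d : nat -> O) (x : O) : Prop :=
  (forall i, S (d i)) /\
  forall n : nat, dvdR (pi ^+ n) (x - \sum_(i < n) d i * pi ^+ i).

Definition phi_t (O : localInt) (pi : O) (S : O -> Prop) (x : O) : O :=
  epsilon (inhabits (0 : O))
    (fun y => exists d, expansion pi S d x /\ expansion pi S (fun i => d i.+1) y).

Definition Obar (I : finType) (O : I -> localInt) := forall t : I, O t.

Definition negO (I : finType) (O : I -> localInt) (x : Obar O) : Obar O :=
  fun t => - x t.

Definition phi (I : finType) (O : I -> localInt) (pi : forall t, O t)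
    (S : forall t, O t -> Prop) (x : Obar O) : Obar O :=
  fun t => phi_t (pi t) (S t) (x t).

(* continuity for the product of the unif-adic topologies *)
Definition continuousO (I : finType) (O : I -> localInt) (R : realType)
    (K : naField R) (f : Obar O -> K) : Prop :=
  forall x : Obar O, forall e : R, 0 < e -> exists N : nat,
    forall y : Obar O, (forall t, dvdR (unif (O t) ^+ N) (y t - x t)) ->
      kabs (f y - f x) < e.

Definition nonvanishing (I : finType) (O : I -> localInt) (R : realType)
    (K : naField R) (f : Obar O -> K) : Prop :=
  forall x, f x <> 0.

From mathcomp Require Import all_boot all_order all_algebra.
From mathcomp Require Import reals.
From mathcomp Require Import ring lra zify.
From Stdlib Require Import ClassicalEpsilon FunctionalExtensionality Classical.
Set Implicit Arguments. Unset Strict Implicit. Unset Printing Implicit Defensive.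
Import Order.TTheory GRing.Theory Num.Theory.
Local Open Scope ring_scope.

(* Conjugating by [x |-> -x] turns [x |-> -phi(-x)] into [phi], and the digit expansions code
   [Obar] as the full one-sided shift over a finite alphabet, so the statement is Livsic's
   theorem for this shift with values in the multiplicative group of [K].  One direction is a
   telescoping product along the periodic orbit.  For the other, [F := H / Gam] is uniformly
   continuous by compactness and has product 1 along every periodic orbit.  The coboundary is
   the limit of the products of [F] along the orbit of [x_0 .. x_(n-1) a a a ...], whose tail
   contributes nothing since [F (a a a ...) = 1]; comparing two periodic orbits of period
   [2n+1] shows that consecutive products have ratio uniformly close to 1, so completeness of
   [K] provides the limit, which satisfies [G x = F x * G (phi x)] because the shift of the
   length-[n+1] truncation of [x] is the length-[n] truncation of [phi x]. *)

Section NonArchimedean.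
Variables (R : realType) (K : naField R).
Implicit Types (x y u v : K) (eps : R).

Lemma kabs0 : kabs (0 : K) = 0.
Proof. exact/kabs_eq0. Qed.

Lemma kabs_gt0 x : x != 0 -> 0 < kabs x.
Proof. by move=> nx; rewrite lt_def kabs_ge0 andbT; apply: contra nx => /eqP/kabs_eq0->. Qed.

Lemma kabs1 : kabs (1 : K) = 1.
Proof.
have nz : kabs (1 : K) != 0 by rewrite gt_eqF // kabs_gt0 ?oner_eq0.
by apply: (mulfI nz); rewrite mulr1 -kabsM mulr1.
Qed.

Lemma kabsN x : kabs (- x) = kabs x.
Proof.
have kN1 : kabs (-1 : K) = 1.
  have := kabsM (-1 : K) (-1); rewrite mulrNN mulr1 kabs1.
  have := kabs_ge0 (-1 : K); nra.
by rewrite -mulN1r kabsM kN1 mul1r.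
Qed.

Lemma kabsV x : x != 0 -> kabs x^-1 = (kabs x)^-1.
Proof.
move=> nx; have nz : kabs x != 0 by rewrite gt_eqF // kabs_gt0.
by apply: (mulfI nz); rewrite -kabsM !mulfV // kabs1.
Qed.

Lemma kabsB x y : kabs (x - y) = kabs (y - x).
Proof. by rewrite -kabsN opprB. Qed.

Lemma kabsD_lt x y eps : kabs x < eps -> kabs y < eps -> kabs (x + y) < eps.
Proof. by move=> hx hy; apply: le_lt_trans (kabs_ultra x y) _; rewrite gt_max hx hy. Qed.

Lemma kabs_eq_of_lt x y : kabs (x - y) < kabs y -> kabs x = kabs y.
Proof.
move=> h; apply/eqP; rewrite eq_le; apply/andP; split.
  by rewrite -[x](subrK y); apply: le_trans (kabs_ultra _ _) _; rewrite ge_max (ltW h) lexx.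
have := kabs_ultra x (y - x); rewrite addrC subrK [kabs (y - x)]kabsB le_max.
by case/orP => // hy; move: (le_lt_trans hy h); rewrite ltxx.
Qed.

Definition near1 eps u := kabs (u - 1) < eps.

Lemma near1_kabs eps u : eps <= 1 -> near1 eps u -> kabs u = 1.
Proof. by move=> e1 hu; rewrite -kabs1; apply: kabs_eq_of_lt; rewrite kabs1 (lt_le_trans hu). Qed.

Lemma near1_neq0 eps u : eps <= 1 -> near1 eps u -> u != 0.
Proof. by move=> e1 /(near1_kabs e1); apply: contra_eqN => /eqP->; rewrite kabs0 eq_sym oner_eq0. Qed.

Lemma near1_1 eps : 0 < eps -> near1 eps 1.
Proof. by rewrite /near1 subrr kabs0. Qed.

Lemma near1M eps u v : eps <= 1 -> near1 eps u -> near1 eps v -> near1 eps (u * v).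
Proof.
move=> e1 hu hv; rewrite /near1 (_ : u * v - 1 = (u - 1) * v + (v - 1)); last by ring.
by apply: kabsD_lt => //; rewrite kabsM (near1_kabs e1 hv) mulr1.
Qed.

Lemma near1V eps u : eps <= 1 -> near1 eps u -> near1 eps u^-1.
Proof.
move=> e1 hu; have nu := near1_neq0 e1 hu.
rewrite /near1 (_ : u^-1 - 1 = - (u - 1) * u^-1); last by rewrite mulNr mulrBl mulfV // mul1r opprB.
by rewrite kabsM kabsV // (near1_kabs e1 hu) invr1 mulr1 kabsN.
Qed.

Lemma near1_div_div eps u v w : eps <= 1 -> v != 0 ->
  near1 eps (u / v) -> near1 eps (w / v) -> near1 eps (u / w).
Proof.
move=> e1 nv hu hw; have nw : w != 0 by rewrite -(divfK nv w) mulf_neq0 // (near1_neq0 e1 hw).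
rewrite (_ : u / w = (u / v) * (w / v)^-1); last by rewrite invf_div mulrA divfK.
exact: near1M e1 hu (near1V e1 hw).
Qed.

Lemma near1_prod eps (J : Type) (r : seq J) (P : pred J) (f : J -> K) :
  0 < eps -> eps <= 1 -> (forall j, P j -> near1 eps (f j)) ->
  near1 eps (\prod_(j <- r | P j) f j).
Proof. by move=> e0 e1 h; apply: (big_ind (near1 eps)) => //; [exact: near1_1 | move=> ? ?; exact: near1M]. Qed.

Lemma near1_div eps u v : v != 0 -> near1 eps (u / v) <-> kabs (u - v) < eps * kabs v.
Proof.
move=> nv; rewrite /near1 (_ : u / v - 1 = (u - v) / v); last by rewrite mulrBl mulfV.
by rewrite kabsM kabsV // ltr_pdivrMr // kabs_gt0.
Qed.

Lemma eq1_near1 u : (forall eps, 0 < eps -> eps <= 1 -> near1 eps u) -> u = 1.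
Proof.
move=> h; apply/eqP; rewrite -subr_eq0; apply/eqP/kabs_eq0/eqP.
rewrite eq_le kabs_ge0 andbT leNgt; apply/negP => hp.
have m0 : 0 < Num.min (kabs (u - 1)) 1 by rewrite lt_min hp ltr01.
by move: (h _ m0); rewrite ge_min lexx orbT /near1 lt_min ltxx => /(_ isT).
Qed.

Definition cvgK (u : nat -> K) l :=
  forall eps, 0 < eps -> exists N, forall m, (N <= m)%N -> kabs (u m - l) < eps.

Definition near1_cauchy_from M eps (u : nat -> K) :=
  forall m n, (M <= m)%N -> (M <= n)%N -> near1 eps (u m / u n).

Lemma near1_cauchy_cvg (u : nat -> K) : (forall n, u n != 0) ->
  (forall eps, 0 < eps -> eps <= 1 -> exists M, near1_cauchy_from M eps u) ->
  exists2 l, l != 0 & cvgK u l.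
Proof.
move=> nu hc; have [M hM] := hc 1 ltr01 (lexx 1).
have b0 : 0 < kabs (u M) by rewrite kabs_gt0.
have kabs_u n : (M <= n)%N -> kabs (u n) = kabs (u M).
  move=> hn; have := near1_kabs (lexx 1) (hM n M hn (leqnn M)).
  by rewrite kabsM kabsV // => /divr1_eq.
have [l hl] : exists l, cvgK u l.
  apply: kcomplete => e e0.
  pose eps := Num.min 1 (e / kabs (u M)).
  have eps0 : 0 < eps by rewrite lt_min ltr01 divr_gt0.
  have eps1 : eps <= 1 by rewrite ge_min lexx.
  have [N hN] := hc eps eps0 eps1.
  exists (maxn N M) => m n; rewrite !geq_max => /andP[hm hMm] /andP[hn hMn].
  have := hN m n hm hn; rewrite near1_div // kabs_u // => /lt_le_trans; apply.
  by rewrite -ler_pdivlMr // ge_min lexx orbT.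
exists l => //; have [N hN] := hl _ b0.
have hm := hN (maxn N M) (leq_maxl _ _); rewrite -(kabs_u (maxn N M)) ?leq_maxr // kabsB in hm.
apply/eqP => l0; move: b0; rewrite -(kabs_u (maxn N M)) ?leq_maxr //.
by rewrite -(kabs_eq_of_lt hm) l0 kabs0 ltxx.
Qed.

Lemma near1_lim M eps (u : nat -> K) l : eps <= 1 -> l != 0 -> cvgK u l ->
  near1_cauchy_from M eps u -> forall n, (M <= n)%N -> near1 eps (u n / l).
Proof.
move=> e1 nl hl hM n hn; have e0 : 0 < eps by apply: le_lt_trans (hM n n hn hn); apply: kabs_ge0.
have [N hN] := hl _ (mulr_gt0 e0 (kabs_gt0 nl)).
have hm := hN (maxn N M) (leq_maxl _ _); rewrite -near1_div // in hm.
have num : u (maxn N M) != 0 by rewrite -[u _](divfK nl) mulf_neq0 // (near1_neq0 e1 hm).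
rewrite (_ : u n / l = u n / u (maxn N M) * (u (maxn N M) / l)); last by rewrite mulrA divfK.
by apply: near1M e1 (hM _ _ hn _) hm; apply: leq_maxr.
Qed.

End NonArchimedean.

Section MulContinuity.
Variables (R : realType) (K : naField R) (X : Type) (close : nat -> X -> X -> Prop).

Definition cont1 (f : X -> K) := forall x eps, 0 < eps -> eps <= 1 ->
  exists N, forall y, close N x y -> near1 eps (f y / f x).

Definition ucont1 (f : X -> K) := forall eps, 0 < eps -> eps <= 1 ->
  exists N, forall x y, close N x y -> near1 eps (f y / f x).

Hypothesis close_mono : forall N N' x y, (N <= N')%N -> close N' x y -> close N x y.

Lemma cont1M (f g : X -> K) : cont1 f -> cont1 g -> cont1 (fun x => f x * g x).
Proof.
move=> hf hg x eps e0 e1; have [N1 h1] := hf x eps e0 e1; have [N2 h2] := hg x eps e0 e1.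
exists (maxn N1 N2) => y hy; rewrite invfM mulrACA.
by apply: near1M e1 (h1 _ _) (h2 _ _); apply: close_mono hy; rewrite ?leq_maxl ?leq_maxr.
Qed.

Lemma cont1V (f : X -> K) : cont1 f -> cont1 (fun x => (f x)^-1).
Proof.
move=> hf x eps e0 e1; have [N h] := hf x eps e0 e1.
by exists N => y hy; rewrite invrK mulrC -invf_div; apply: near1V e1 (h y hy).
Qed.

End MulContinuity.

Lemma cont1_comp (R : realType) (K : naField R) (X Y : Type)
    (closeX : nat -> X -> X -> Prop) (closeY : nat -> Y -> Y -> Prop) (h : X -> Y) (f : Y -> K) :
  (forall x N, exists N', forall y, closeX N' x y -> closeY N (h x) (h y)) ->
  cont1 closeY f -> cont1 closeX (fun x => f (h x)).
Proof.
move=> hh hf x eps e0 e1; have [N hN] := hf (h x) eps e0 e1.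
by have [N' hN'] := hh x N; exists N' => y /hN'/hN.
Qed.

Definition inf_often (P : nat -> Prop) := forall N, exists2 m, (N <= m)%N & P m.

Lemma inf_often_pigeonhole (C : finType) (P : C -> nat -> Prop) :
  inf_often (fun m => exists c, P c m) -> exists c, inf_often (P c).
Proof.
move=> hP; apply: NNPP => hn.
have bound c : exists N, forall m, (N <= m)%N -> ~ P c m.
  apply: NNPP => hc; apply: hn; exists c => N.
  by apply: NNPP => hN; apply: hc; exists N => m hm hPm; apply: hN; exists m.
pose Nc c := epsilon (inhabits 0%N) (fun N => forall m, (N <= m)%N -> ~ P c m).
have hNc c : forall m, (Nc c <= m)%N -> ~ P c m by apply: epsilon_spec (bound c).
have [m hm [c hc]] := hP (\max_c Nc c).
by apply: (hNc c m _ hc); apply: leq_trans hm; apply: leq_bigmax.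
Qed.

Lemma rcons_choice (T : Type) (t0 : T) (P : seq T -> Prop) :
  P [::] -> (forall s, P s -> exists t, P (rcons s t)) ->
  exists w : nat -> T, forall k, P (mkseq w k).
Proof.
move=> P0 hP; pose next s := epsilon (inhabits t0) (fun t => P (rcons s t)).
pose pref k := iter k (fun s => rcons s (next s)) [::].
have size_pref k : size (pref k) = k by elim: k => //= k IH; rewrite size_rcons IH.
have P_pref k : P (pref k) by elim: k => //= k Pk; apply: epsilon_spec (hP _ Pk).
exists (fun i => nth t0 (pref i.+1) i) => k; suff -> : mkseq (fun i => nth t0 (pref i.+1) i) k = pref k by [].
elim: k => //= k IH; rewrite -cats1 /mkseq -addn1 iotaD map_cat -/(mkseq _ k) IH.
by rewrite /= nth_rcons size_pref ltnn eqxx cats1.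
Qed.

Section ShiftLivsic.
Variables (R : realType) (K : naField R).
Variables (X A : Type) (shift : X -> X) (code : X -> nat -> A) (digit : A -> Prop)
  (decode : (nat -> A) -> X).
Hypotheses (code_decode : forall w, (forall i, digit (w i)) -> forall i, code (decode w) i = w i)
  (code_inj : forall x y, (forall i, code x i = code y i) -> x = y)
  (code_digit : forall x i, digit (code x i))
  (code_shift : forall x i, code (shift x) i = code x i.+1).
Variables (C : finType) (letter : C -> A).
Hypotheses (letter_digit : forall c, digit (letter c))
  (letter_onto : forall a, digit a -> exists c, letter c = a).
Variable x0 : X.

Definition agree m x y := forall i, (i < m)%N -> code x i = code y i.

Lemma agree_mono m m' x y : (m <= m')%N -> agree m' x y -> agree m x y.
Proof. by move=> hm h i hi; apply: h; apply: leq_trans hm. Qed.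

Lemma agree_trans m x y z : agree m x y -> agree m y z -> agree m x z.
Proof. by move=> h1 h2 i hi; rewrite h1 // h2. Qed.

(* Compactness of the shift space, by Koenig's lemma: if uniform continuity fails at [eps],
   some infinite word [w] is the common prefix of bad pairs at arbitrarily fine scales. *)
Lemma cont1_ucont1 (f : X -> K) : cont1 agree f -> (forall x, f x != 0) -> ucont1 agree f.
Proof.
move=> hc nf eps e0 e1; apply: NNPP => hn.
have [c0 _] := letter_onto (code_digit x0 0).
pose bad_with s m := exists x y, [/\ agree m x y, ~ near1 eps (f y / f x)
   & forall i, (i < size s)%N -> code x i = letter (nth c0 s i)].
have bad0 : inf_often (bad_with [::]).
  move=> N; exists N => //; apply: NNPP => h; apply: hn; exists N => x y hxy.
  by apply: NNPP => hxy'; apply: h; exists x, y.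
have badS s : inf_often (bad_with s) -> exists c, inf_often (bad_with (rcons s c)).
  move=> hs; apply: inf_often_pigeonhole => N; have [m hm [x [y [hxy hf hx]]]] := hs N.
  have [c hcx] := letter_onto (code_digit x (size s)).
  exists m => //; exists c, x, y; split=> // i; rewrite size_rcons ltnS leq_eqVlt nth_rcons.
  by case/orP => [/eqP ->|hi]; rewrite ?ltnn ?eqxx ?hcx // hi hx.
have [w hw] := rcons_choice c0 bad0 badS.
pose z := decode (fun i => letter (w i)).
have [m hm] := hc z eps e0 e1.
have [m' hm' [x [y [hxy hf hx]]]] := hw m m.
have hzx : agree m z x.
  move=> i hi; rewrite code_decode; last by move=> j; apply: letter_digit.
  by rewrite hx ?size_mkseq ?nth_mkseq //; apply: leq_trans hi hm'.
apply: hf; apply: near1_div_div e1 (nf z) (hm y _) (hm x _) => //.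
by apply: agree_trans hzx (agree_mono hm' hxy).
Qed.

Lemma code_iter x j i : code (iter j shift x) i = code x (i + j).
Proof. by elim: j i => [|j IH] i; rewrite ?addn0 //= code_shift IH addSnnS. Qed.

Section Construction.
Variable F : X -> K.
Hypotheses (F_neq0 : forall x, F x != 0) (F_cont : cont1 agree F)
  (F_periodic : forall n x, iter n shift x = x -> \prod_(j < n) F (iter j shift x) = 1).

Let F_ucont := cont1_ucont1 F_cont F_neq0.

Definition orbit_prod n x := \prod_(j < n) F (iter j shift x).

Lemma orbit_prodD m n x : orbit_prod (m + n) x = orbit_prod m x * orbit_prod n (iter m shift x).
Proof. by rewrite /orbit_prod big_split_ord; congr (_ * _); apply: eq_bigr => j _; rewrite /= -iterD addnC. Qed.

Lemma orbit_prod_neq0 n x : orbit_prod n x != 0.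
Proof. exact/prodf_neq0. Qed.

Lemma near1_orbit_prod eps n x y : 0 < eps -> eps <= 1 ->
  (forall j, (j < n)%N -> near1 eps (F (iter j shift x) / F (iter j shift y))) ->
  near1 eps (orbit_prod n x / orbit_prod n y).
Proof. by move=> e0 e1 h; rewrite /orbit_prod -prodf_div; apply: near1_prod => // j _; apply: h. Qed.

Let a := code x0 0.

Definition trunc n x := decode (fun i => if (i < n)%N then code x i else a).

Definition loop p k x := decode (fun i => if (i %% p < k)%N then code x (i %% p) else a).

Definition fixpt := decode (fun=> a).

Lemma code_pad (P : pred nat) (w : nat -> nat) x i :
  code (decode (fun j => if P j then code x (w j) else a)) i = if P i then code x (w i) else a.
Proof. by apply: code_decode => j; case: ifP => _; apply: code_digit. Qed.

Lemma code_trunc n x i : code (trunc n x) i = if (i < n)%N then code x i else a.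
Proof. exact: (code_pad (fun j => j < n)%N id). Qed.

Lemma code_loop p k x i : code (loop p k x) i = if (i %% p < k)%N then code x (i %% p) else a.
Proof. exact: (code_pad (fun j => j %% p < k)%N (modn^~ p)). Qed.

Lemma code_fixpt i : code fixpt i = a.
Proof. by apply: code_decode => _; apply: code_digit. Qed.

Lemma loop_periodic p k x : iter p shift (loop p k x) = loop p k x.
Proof. by apply: code_inj => i; rewrite code_iter !code_loop modnDr. Qed.

Lemma F_fixpt : F fixpt = 1.
Proof.
have fix1 : iter 1 shift fixpt = fixpt by apply: code_inj => i; rewrite code_shift !code_fixpt.
by have := F_periodic fix1; rewrite big_ord1.
Qed.

Definition trunc_prod n x := orbit_prod n (trunc n x).

Lemma trunc_prod_neq0 n x : trunc_prod n x != 0.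
Proof. exact: orbit_prod_neq0. Qed.

Section Modulus.
Variables (eps : R) (m : nat).
Hypotheses (e0 : 0 < eps) (e1 : eps <= 1)
  (hm : forall x y, agree m x y -> near1 eps (F y / F x)).

Lemma near1_trunc_loop p k x : (m + k <= p.+1)%N ->
  near1 eps (trunc_prod k x / orbit_prod k (loop p k x)).
Proof.
move=> hmk; apply: near1_orbit_prod => // j hj; apply: hm => i hi.
rewrite !code_iter code_loop code_trunc modn_small //; lia.
Qed.

(* Compare the two periodic orbits of period [2n+1] through [x_0 .. x_n a^n] and
   [x_0 .. x_(n-1) a^(n+1)]: their heads approximate [trunc_prod n.+1 x] and [trunc_prod n x],
   and their tails approximate each other. *)
Lemma trunc_prodS_near1 n x : (m <= n)%N -> near1 eps (trunc_prod n.+1 x / trunc_prod n x).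
Proof.
move=> hmn; set p := (n.+1 + n)%N; set L1 := loop p n.+1 x; set L2 := loop p n x.
have head1 : near1 eps (trunc_prod n.+1 x / orbit_prod n.+1 L1).
  by apply: near1_trunc_loop; rewrite /p; lia.
have head2 : near1 eps (trunc_prod n x / orbit_prod n L2).
  by apply: near1_trunc_loop; rewrite /p; lia.
have mid2 : near1 eps (F (iter n shift L2)).
  rewrite -[F (iter n _ _)]divr1 -F_fixpt; apply: hm => i hi.
  rewrite code_iter code_loop code_fixpt modn_small; last by rewrite /p; lia.
  by case: ifP => //; lia.
have tails : near1 eps (orbit_prod n (iter n.+1 shift L2) / orbit_prod n (iter n.+1 shift L1)).
  apply: near1_orbit_prod => // j hj; apply: hm => i hi; rewrite -!iterD !code_iter !code_loop.
  set q := (i + (j + n.+1))%N; suff qn : (q %% p != n)%N by rewrite ltnS leq_eqVlt (negbTE qn).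
  case: (ltnP q p) => hqp; first by rewrite modn_small //; lia.
  by rewrite -(subnK hqp) modnDr modn_small; rewrite /p; lia.
have per1 : orbit_prod n (iter n.+1 shift L1) * orbit_prod n.+1 L1 = 1.
  by rewrite mulrC -orbit_prodD; apply: F_periodic (loop_periodic _ _ _).
have per2 : F (iter n shift L2) * orbit_prod n (iter n.+1 shift L2) * orbit_prod n L2 = 1.
  have split2 : orbit_prod n.+1 (iter n shift L2) =
      F (iter n shift L2) * orbit_prod n (iter n.+1 shift L2).
    by rewrite -add1n orbit_prodD /orbit_prod big_ord1.
  by rewrite -split2 mulrC -orbit_prodD addnC; apply: F_periodic (loop_periodic _ _ _).
rewrite (_ : trunc_prod n.+1 x / trunc_prod n x = trunc_prod n.+1 x / orbit_prod n.+1 L1 *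
    (F (iter n shift L2) * (orbit_prod n (iter n.+1 shift L2) / orbit_prod n (iter n.+1 shift L1)))
    / (trunc_prod n x / orbit_prod n L2)).
  by apply: near1M e1 (near1M e1 head1 (near1M e1 mid2 tails)) (near1V e1 head2).
rewrite -(mulr1_eq per1) -(mulr1_eq per2); field.
by rewrite !orbit_prod_neq0 F_neq0 oner_neq0.
Qed.

Lemma trunc_prodD_near1 l d x : (m <= l)%N -> near1 eps (trunc_prod (l + d) x / trunc_prod l x).
Proof.
move=> hl; elim: d => [|d IH]; first by rewrite addn0 divff ?trunc_prod_neq0 //; apply: near1_1.
rewrite addnS -(divfK (trunc_prod_neq0 (l + d) x) (trunc_prod _ x)) -[_ * _ / _]mulrA.
by apply: near1M e1 (trunc_prodS_near1 _ _) IH; apply: leq_trans hl (leq_addr _ _).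
Qed.

Lemma trunc_prod_cauchy x : near1_cauchy_from m eps (fun n => trunc_prod n x).
Proof.
move=> n1 n2 h1 h2; apply: near1_div_div e1 (trunc_prod_neq0 m x) _ _.
  by rewrite -(subnKC h1); apply: trunc_prodD_near1.
by rewrite -(subnKC h2); apply: trunc_prodD_near1.
Qed.

End Modulus.

Definition transfer x := epsilon (inhabits 0)
  (fun l => l != 0 /\ cvgK (fun n => trunc_prod n x) l).

Lemma transfer_spec x : transfer x != 0 /\ cvgK (fun n => trunc_prod n x) (transfer x).
Proof.
apply: (epsilon_spec _ (fun l => l != 0 /\ cvgK (fun n => trunc_prod n x) l)).
have [|l l0 hl] := near1_cauchy_cvg (@trunc_prod_neq0^~ x); last by exists l.
by move=> eps e0 e1; have [m hm] := F_ucont e0 e1; exists m; apply: trunc_prod_cauchy.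
Qed.

Lemma transfer_neq0 x : transfer x != 0.
Proof. exact: (transfer_spec x).1. Qed.

Lemma trunc_prod_near1_transfer eps : 0 < eps -> eps <= 1 ->
  exists M, forall n x, (M <= n)%N -> near1 eps (trunc_prod n x / transfer x).
Proof.
move=> e0 e1; have [m hm] := F_ucont e0 e1; exists m => n x.
exact: near1_lim e1 (transfer_neq0 x) (transfer_spec x).2 (trunc_prod_cauchy e0 e1 hm x) n.
Qed.

Lemma trunc_agree n x y : agree n x y -> trunc n x = trunc n y.
Proof. by move=> h; apply: code_inj => i; rewrite !code_trunc; case: ifP => // /h. Qed.

Lemma trunc_prodS n x : trunc_prod n.+1 x = F (trunc n.+1 x) * trunc_prod n (shift x).
Proof.
rewrite /trunc_prod -add1n orbit_prodD /orbit_prod big_ord1; congr (_ * _).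
apply: eq_bigr => j _; congr (F (iter _ _ _)); apply: code_inj => i.
by rewrite code_shift !code_trunc code_shift.
Qed.

Lemma transfer_cont : cont1 agree transfer.
Proof.
move=> x eps e0 e1; have [M hM] := trunc_prod_near1_transfer e0 e1.
exists M => y /trunc_agree hxy; have hy := hM M y (leqnn M); rewrite /trunc_prod -hxy in hy.
by apply: (near1_div_div e1 (trunc_prod_neq0 M x)); rewrite -invf_div; apply: (near1V e1);
  [apply: hy | apply: hM].
Qed.

Lemma transfer_eq x : transfer x = F x * transfer (shift x).
Proof.
suff: F x * transfer (shift x) / transfer x = 1 by move/divr1_eq.
apply: eq1_near1 => eps e0 e1.
have [M hM] := trunc_prod_near1_transfer e0 e1; have [m hm] := F_ucont e0 e1.
set n := maxn M m; have hF : near1 eps (F (trunc n.+1 x) / F x).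
  apply: hm => i hi; rewrite code_trunc ifT //.
  exact: leq_trans hi (leq_trans (leq_maxr M m) (leqnSn n)).
have hx := hM n.+1 x (leq_trans (leq_maxl M m) (leqnSn n)).
have hsx := hM n (shift x) (leq_maxl M m).
rewrite trunc_prodS in hx.
rewrite (_ : F x * _ / _ = F (trunc n.+1 x) * trunc_prod n (shift x) / transfer x /
  (trunc_prod n (shift x) / transfer (shift x)) / (F (trunc n.+1 x) / F x)).
  by apply: near1M e1 (near1M e1 hx (near1V e1 hsx)) (near1V e1 hF).
by field; rewrite !F_neq0 !transfer_neq0 trunc_prod_neq0.
Qed.

Lemma shift_livsic : exists G : X -> K, [/\ forall x, G x != 0, cont1 agree G &
  forall x, G x = F x * G (shift x)].
Proof. by exists transfer; split; [apply: transfer_neq0 | apply: transfer_cont | apply: transfer_eq]. Qed.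

End Construction.
End ShiftLivsic.

Section Divisibility.
Variable T : comRingType.
Implicit Types a b c : T.

Lemma dvdR0 a : dvdR a 0.
Proof. by exists 0; rewrite mul0r. Qed.

Lemma dvdR_mull a b : dvdR a (b * a).
Proof. by exists b. Qed.

Lemma dvdRD a b c : dvdR a b -> dvdR a c -> dvdR a (b + c).
Proof. by move=> [u ->] [v ->]; exists (u + v); rewrite mulrDl. Qed.

Lemma dvdRN a b : dvdR a b -> dvdR a (- b).
Proof. by move=> [u ->]; exists (- u); rewrite mulNr. Qed.

Lemma dvdRB a b c : dvdR a b -> dvdR a c -> dvdR a (b - c).
Proof. by move=> hb hc; apply: dvdRD hb (dvdRN hc). Qed.

Lemma dvdR_mulr a b c : dvdR a b -> dvdR a (c * b).
Proof. by move=> [u ->]; exists (c * u); rewrite mulrA. Qed.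

Lemma dvdR_trans a b c : dvdR a b -> dvdR b c -> dvdR a c.
Proof. by move=> [u ->] [v ->]; exists (v * u); rewrite mulrA. Qed.

Lemma dvdR_exp a m n : (m <= n)%N -> dvdR (a ^+ m) (a ^+ n).
Proof. by move=> h; exists (a ^+ (n - m)); rewrite -exprD subnK. Qed.

Lemma dvdR_subC a b c : dvdR a (b - c) -> dvdR a (c - b).
Proof. by move=> /dvdRN; rewrite opprB. Qed.

End Divisibility.

Lemma dvdR_mul2r (T : idomainType) (a b c : T) : c != 0 -> dvdR (a * c) (b * c) -> dvdR a b.
Proof. by move=> nc [u h]; exists u; apply: (mulIf nc); rewrite h mulrA. Qed.

Section Digits.
Variables (L : localInt) (e : nat) (p : L) (S : L -> Prop).
Hypotheses (e_gt0 : (0 < e)%N) (hp : p = unif L ^+ e)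
  (hS : forall x : L, exists s, (S s /\ dvdR p (x - s)) /\
          forall s', S s' /\ dvdR p (x - s') -> s' = s).

Lemma p_neq0 : p != 0.
Proof. by rewrite hp expf_neq0 // unif_neq0. Qed.

Lemma dvdR_unif_p n : dvdR (unif L ^+ n) (p ^+ n).
Proof. by rewrite hp -exprM; apply: dvdR_exp; rewrite leq_pmull. Qed.

Lemma dvdR_p_unif n : dvdR (p ^+ n) (unif L ^+ (e * n)).
Proof. by rewrite hp -exprM; exists 1; rewrite mul1r. Qed.

Lemma eq0_dvdR_pexp z : (forall n, dvdR (p ^+ n) z) -> z = 0.
Proof.
move=> h; apply: NNPP => /eqP nz; have [u [k [uu ez]]] := unif_dvr nz.
have [c hc] := dvdR_trans (dvdR_unif_p k.+1) (h k.+1).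
have : u = c * unif L.
  by apply: (mulIf (expf_neq0 k (unif_neq0 L))); rewrite -ez hc exprS mulrA.
by move=> eu; move: uu; rewrite eu unitrM (negbTE (unif_nonunit L)) andbF.
Qed.

Definition rep (x : L) := epsilon (inhabits 0) (fun s => S s /\ dvdR p (x - s)).

Lemma rep_spec x : S (rep x) /\ dvdR p (x - rep x).
Proof.
apply: (epsilon_spec _ (fun s => S s /\ dvdR p (x - s))).
by have [s [hs _]] := hS x; exists s.
Qed.

Lemma rep_uniq x s : S s -> dvdR p (x - s) -> s = rep x.
Proof.
move=> h1 h2; have [s0 [_ hu]] := hS x.
by rewrite (hu s (conj h1 h2)) (hu (rep x) (rep_spec x)).
Qed.

Lemma rep_digit s : S s -> rep s = s.
Proof. by move=> hs; rewrite -(rep_uniq hs) // subrr; apply: dvdR0. Qed.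

Definition quo (x : L) := epsilon (inhabits 0) (fun c => x - rep x = c * p).

Lemma quo_spec x : x - rep x = quo x * p.
Proof. exact: (epsilon_spec _ (fun c => x - rep x = c * p)) (rep_spec x).2. Qed.

Definition digits (x : L) i := rep (iter i quo x).

Lemma digits_digit x i : S (digits x i).
Proof. exact: (rep_spec _).1. Qed.

Lemma digitsS x i : digits x i.+1 = digits (quo x) i.
Proof. by rewrite /digits iterSr. Qed.

Lemma sum_digitsS (d : nat -> L) n :
  \sum_(i < n.+1) d i * p ^+ i = d 0%N + (\sum_(i < n) d i.+1 * p ^+ i) * p.
Proof. by rewrite big_ord_recl mulr1 mulr_suml; congr (_ + _); apply: eq_bigr => i _; rewrite exprSr mulrA. Qed.

Lemma digits_sum x n : x - \sum_(i < n) digits x i * p ^+ i = iter n quo x * p ^+ n.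
Proof.
elim: n x => [|n IH] x; first by rewrite big_ord0 subr0 mulr1.
rewrite sum_digitsS opprD addrA (_ : digits x 0 = rep x) // quo_spec -mulrBl.
under eq_bigr do rewrite digitsS.
by rewrite IH -iterSr exprSr mulrA.
Qed.

Lemma digits_expansion x : expansion p S (digits x) x.
Proof. by split=> [i | n]; rewrite ?digits_sum; [apply: digits_digit | apply: dvdR_mull]. Qed.

Lemma expansion_digits d x : expansion p S d x -> forall i, d i = digits x i.
Proof.
move=> hd i; elim: i d x hd => [|i IH] d x [hd hx];
  have d0 : d 0%N = rep x by apply: rep_uniq => //; have := hx 1%N; rewrite big_ord1 expr1 mulr1.
  exact: d0.
rewrite digitsS; apply: (IH (fun i => d i.+1)); split=> // n.
apply: (dvdR_mul2r p_neq0); rewrite -exprSr mulrBl -quo_spec.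
by have := hx n.+1; rewrite sum_digitsS d0 opprD addrA.
Qed.

Lemma dvdR_digits_agree x y n : (forall i, (i < n)%N -> digits x i = digits y i) ->
  dvdR (p ^+ n) (x - y).
Proof.
move=> h; have -> : x - y =
    (x - \sum_(i < n) digits x i * p ^+ i) - (y - \sum_(i < n) digits y i * p ^+ i).
  by rewrite (eq_bigr (fun i : 'I_n => digits y i * p ^+ i)) => [|i _]; rewrite ?h //; ring.
by rewrite !digits_sum -mulrBl; apply: dvdR_mull.
Qed.

Lemma digits_agree_dvdR n x y : dvdR (p ^+ n) (x - y) ->
  forall i, (i < n)%N -> digits x i = digits y i.
Proof.
elim: n x y => // n IH x y hxy.
have rep_xy : rep x = rep y.
  apply/esym/rep_uniq; first exact: (rep_spec y).1.
  rewrite -(subrKA y); apply: dvdRD (rep_spec y).2.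
  by apply: dvdR_trans hxy; rewrite -{1}(expr1 p); apply: dvdR_exp.
have quo_xy : dvdR (p ^+ n) (quo x - quo y).
  apply: (dvdR_mul2r p_neq0); rewrite -exprSr mulrBl -!quo_spec rep_xy.
  by rewrite (_ : x - rep y - (y - rep y) = x - y) //; ring.
by case=> [_|i hi]; rewrite ?digitsS; [apply: rep_xy | apply: IH].
Qed.

Lemma digits_inj x y : (forall i, digits x i = digits y i) -> x = y.
Proof.
move=> h; apply/eqP; rewrite -subr_eq0; apply/eqP/eq0_dvdR_pexp => n.
exact: dvdR_digits_agree.
Qed.

Lemma expansion_exists (w : nat -> L) : (forall i, S (w i)) -> exists x, expansion p S w x.
Proof.
move=> hw; pose s n := \sum_(i < n) w i * p ^+ i.
have s_cauchy N m : (N <= m)%N -> dvdR (p ^+ N) (s m - s N).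
  move/subnK <-; elim: (m - N)%N => [|k IH]; first by rewrite add0n subrr; apply: dvdR0.
  rewrite addSn /s big_ord_recr /= addrAC; apply: dvdRD IH _.
  by apply: dvdR_mulr; apply: dvdR_exp; apply: leq_addl.
have [l hl] : exists l, forall n, exists N, forall m, (N <= m)%N -> dvdR (unif L ^+ n) (s m - l).
  apply: unif_complete => n; exists n => m hm.
  exact: dvdR_trans (dvdR_unif_p n) (s_cauchy n m hm).
exists l; split=> // n; have [N hN] := hl (e * n)%N.
rewrite (_ : l - s n = (s (maxn N n) - s n) - (s (maxn N n) - l)); last by ring.
apply: dvdRB; first by apply: s_cauchy; apply: leq_maxr.
exact: dvdR_trans (dvdR_p_unif n) (hN _ (leq_maxl _ _)).
Qed.

Definition undigits (w : nat -> L) := epsilon (inhabits 0) (expansion p S w).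

Lemma digits_undigits w : (forall i, S (w i)) -> forall i, digits (undigits w) i = w i.
Proof.
by move=> hw i; symmetry; apply: expansion_digits; exact: (epsilon_spec _ _ (expansion_exists hw)).
Qed.

Lemma digits_phi_t x i : digits (phi_t p S x) i = digits x i.+1.
Proof.
have [y hy] := expansion_exists (fun i => digits_digit x i.+1).
have [d [hdx hdy]] : exists d, expansion p S d x /\ expansion p S (fun i => d i.+1) (phi_t p S x).
  apply: (epsilon_spec _ (fun y => exists d, expansion p S d x /\ expansion p S (fun i => d i.+1) y)).
  by exists y, (digits x); split=> //; apply: digits_expansion.
by rewrite -(expansion_digits hdy) (expansion_digits hdx).
Qed.

Lemma residues_finite k : exists s : seq L,
  forall x, exists2 r, r \in s & dvdR (unif L ^+ k) (x - r).
Proof.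
elim: k => [|k [s hs]].
  by exists [:: 0] => x; exists 0; rewrite ?inE // expr0; exists (x - 0); rewrite mulr1.
have [s1 hs1] := residue_finite L.
exists [seq r + b * unif L ^+ k | r <- s, b <- s1] => x.
have [r hr [c hc]] := hs x; have [b hb [c' hc']] := hs1 c.
exists (r + b * unif L ^+ k); first by apply/allpairsP; exists (r, b).
exists c'; rewrite (_ : x - _ = (x - r) - b * unif L ^+ k); last by ring.
by rewrite hc -mulrBl hc' exprSr; ring.
Qed.

Lemma digit_set_finite : exists s : seq L, forall x, S x -> x \in s.
Proof.
have [s hs] := residues_finite e; exists (map rep s) => x hx.
have [r hr hxr] := hs x; rewrite -hp in hxr.
by apply/mapP; exists r => //; apply: rep_uniq => //; apply: dvdR_subC.
Qed.

End Digits.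

Lemma prod_shift_periodic (T : comRingType) (g : nat -> T) n :
  g n = g 0%N -> \prod_(j < n) g j.+1 = \prod_(j < n) g j.
Proof. by case: n => [|n] gn; rewrite ?big_ord0 // big_ord_recr big_ord_recl gn mulrC. Qed.

Section ProductShift.
Unset Implicit Arguments.
Variables (I : finType) (O : I -> localInt) (e : I -> nat) (pi : forall t, O t)
  (S : forall t, O t -> Prop).
Hypotheses (he : forall t, (0 < e t)%N) (hpi : forall t, pi t = unif (O t) ^+ e t)
  (hS : forall t (x : O t), exists s, (S t s /\ dvdR (pi t) (x - s)) /\
          forall s', S t s' /\ dvdR (pi t) (x - s') -> s' = s).
Set Implicit Arguments.

Lemma negOK (x : Obar O) : negO (negO x) = x.
Proof. by apply: functional_extensionality_dep => t; rewrite /negO opprK. Qed.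

Definition codeO (x : Obar O) i : Obar O := fun t => digits (pi t) (S t) (x t) i.
Definition decodeO (w : nat -> Obar O) : Obar O := fun t => undigits (pi t) (S t) (fun i => w i t).
Definition digitO (a : Obar O) := forall t, S t (a t).

Lemma codeO_decodeO w : (forall i, digitO (w i)) -> forall i, codeO (decodeO w) i = w i.
Proof.
move=> hw i; apply: functional_extensionality_dep => t.
by apply: (digits_undigits (he t) (hpi t) (hS t)) => j; apply: hw.
Qed.

Lemma codeO_inj x y : (forall i, codeO x i = codeO y i) -> x = y.
Proof.
move=> h; apply: functional_extensionality_dep => t.
by apply: (digits_inj (he t) (hpi t) (hS t)) => i; apply: (congr1 (@^~ t) (h i)).
Qed.

Lemma codeO_digit x i : digitO (codeO x i).
Proof. by move=> t; apply: (digits_digit (hS t)). Qed.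

Lemma codeO_phi x i : codeO (phi pi S x) i = codeO x i.+1.
Proof. by apply: functional_extensionality_dep => t; apply: (digits_phi_t (he t) (hpi t) (hS t)). Qed.

Definition digit_list t := epsilon (inhabits [::]) (fun s : seq (O t) => forall x, S t x -> x \in s).

Lemma mem_digit_list t x : S t x -> x \in digit_list t.
Proof.
move: x; apply: (epsilon_spec _ (fun s : seq (O t) => forall x, S t x -> x \in s)).
exact: (digit_set_finite (hpi t) (hS t)).
Qed.

Definition max_digits := \max_t size (digit_list t).

(* [rep] makes every letter a digit, even where [nth] falls back to [0]. *)
Definition letterO (c : {ffun I -> 'I_max_digits.+1}) : Obar O :=
  fun t => rep (pi t) (S t) (nth 0 (digit_list t) (c t)).

Lemma letterO_digit c : digitO (letterO c).
Proof. by move=> t; apply: (rep_spec (hS t) _).1. Qed.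

Lemma letterO_onto a : digitO a -> exists c, letterO c = a.
Proof.
move=> ha; exists [ffun t => inord (index (a t) (digit_list t))].
apply: functional_extensionality_dep => t; rewrite /letterO ffunE inordK.
  by rewrite nth_index ?mem_digit_list // (rep_digit (hS t)).
rewrite ltnS; apply: leq_trans (leq_bigmax_cond (F := fun t => size (digit_list t)) t isT).
by apply: ltnW; rewrite index_mem mem_digit_list.
Qed.

Definition closeU N (x y : Obar O) := forall t, dvdR (unif (O t) ^+ N) (y t - x t).

Lemma closeU_mono N N' x y : (N <= N')%N -> closeU N' x y -> closeU N x y.
Proof. by move=> h hc t; apply: dvdR_trans (hc t); apply: dvdR_exp. Qed.

Lemma closeU_negO N x y : closeU N x y -> closeU N (negO x) (negO y).
Proof. by move=> h t; rewrite /negO -opprD; apply: dvdRN. Qed.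

Lemma agree_closeU m x y : agree codeO m x y -> closeU m x y.
Proof.
move=> h t; apply: dvdR_trans (dvdR_unif_p (he t) (hpi t) m) _; apply: dvdR_subC.
by apply: (dvdR_digits_agree (hS t)) => i /h /(congr1 (@^~ t)).
Qed.

Definition max_e := \max_t e t.

Lemma closeU_agree m x y : closeU (max_e * m) x y -> agree codeO m x y.
Proof.
move=> h i hi; apply: functional_extensionality_dep => t; apply/esym.
apply: (digits_agree_dvdR (hpi t) (hS t) _ hi); apply: dvdR_trans (dvdR_p_unif (hpi t) m) _.
by apply: dvdR_trans (h t); apply: dvdR_exp; rewrite leq_mul2r leq_bigmax orbT.
Qed.

Section Continuity.
Variables (R : realType) (K : naField R).

Lemma continuousO_cont1 (f : Obar O -> K) : nonvanishing f ->
  continuousO f <-> cont1 closeU f.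
Proof.
move=> nf; have nfx x : f x != 0 by apply/eqP.
split=> [hc x eps e0 e1 | hc x d d0].
  have [N hN] := hc x _ (mulr_gt0 e0 (kabs_gt0 (nfx x))).
  by exists N => y /hN; rewrite near1_div.
have fx0 := kabs_gt0 (nfx x); pose eps := Num.min 1 (d / kabs (f x)).
have eps0 : 0 < eps by rewrite lt_min ltr01 divr_gt0.
have eps1 : eps <= 1 by rewrite ge_min lexx.
have [N hN] := hc x eps eps0 eps1; exists N => y /hN; rewrite near1_div // => /lt_le_trans; apply.
by rewrite -ler_pdivlMr // ge_min lexx orbT.
Qed.

Lemma cont1_closeU_agree (f : Obar O -> K) : cont1 closeU f <-> cont1 (agree codeO) f.
Proof.
split; apply: (cont1_comp (h := id)) => x N.
  by exists N => y; apply: agree_closeU.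
by exists (max_e * N)%N => y; apply: closeU_agree.
Qed.

Lemma cont1_negO (f : Obar O -> K) : cont1 closeU f -> cont1 closeU (fun x => f (negO x)).
Proof. by apply: cont1_comp => x N; exists N => y; apply: closeU_negO. Qed.

Lemma cont1_phi (f : Obar O -> K) : cont1 closeU f -> cont1 closeU (fun x => f (phi pi S x)).
Proof.
apply: cont1_comp => x N; exists (max_e * N.+1)%N => y /closeU_agree hxy.
by apply: agree_closeU => i hi; rewrite !codeO_phi; apply: hxy.
Qed.

Lemma product_livsic (F : Obar O -> K) : continuousO F -> nonvanishing F ->
  (forall n x, iter n (phi pi S) x = x -> \prod_(j < n) F (iter j (phi pi S) x) = 1) ->
  exists G, [/\ continuousO G, nonvanishing G & forall x, G x = F x * G (phi pi S x)].
Proof.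
move=> Fc Fn Fper; have F_neq0 x : F x != 0 by apply/eqP.
have /cont1_closeU_agree Fc1 := (continuousO_cont1 Fn).1 Fc.
have [G [G_neq0 Gc Geq]] := shift_livsic codeO_decodeO codeO_inj codeO_digit codeO_phi
  letterO_digit letterO_onto (fun=> 0) F_neq0 Fc1 Fper.
have Gn : nonvanishing G by move=> x; apply/eqP.
by exists G; split=> //; apply/(continuousO_cont1 Gn)/cont1_closeU_agree.
Qed.

Lemma coboundary_of_periodic_products (Gam H : Obar O -> K) :
  continuousO Gam -> nonvanishing Gam -> continuousO H -> nonvanishing H ->
  (forall n x, iter n (phi pi S) (negO x) = negO x ->
     \prod_(j < n) Gam (negO (iter j (phi pi S) (negO x))) =
     \prod_(j < n) H (negO (iter j (phi pi S) (negO x)))) ->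
  exists G, [/\ continuousO G, nonvanishing G &
    forall x, H x = Gam x * (G x / G (negO (phi pi S (negO x))))].
Proof.
move=> Gc Gn Hc Hn hper; have Gam0 x : Gam x != 0 by apply/eqP.
have H0 x : H x != 0 by apply/eqP.
pose F u := H (negO u) / Gam (negO u).
have Fn : nonvanishing F by move=> u; apply/eqP; rewrite mulf_neq0 ?invr_eq0.
have Fc : continuousO F.
  apply/(continuousO_cont1 Fn).
  apply: (cont1M closeU_mono (f := fun u => H (negO u)) (g := fun u => (Gam (negO u))^-1)).
    by apply: cont1_negO; apply/(continuousO_cont1 Hn).
  by apply: (cont1V (f := fun u => Gam (negO u))); apply: cont1_negO; apply/(continuousO_cont1 Gn).
have Fper n u : iter n (phi pi S) u = u -> \prod_(j < n) F (iter j (phi pi S) u) = 1.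
  move=> hu; rewrite prodf_div -(negOK u) -hper ?negOK // divff //.
  by apply/prodf_neq0 => j _.
have [G0 [G0c G0n G0eq]] := product_livsic Fc Fn Fper.
exists (fun x => G0 (negO x)); split=> [||x].
- have G0n' : nonvanishing (fun x => G0 (negO x)) by move=> x; apply: G0n.
  by apply/(continuousO_cont1 G0n'); apply: cont1_negO; apply/(continuousO_cont1 G0n).
- by move=> x; apply: G0n.
rewrite negOK G0eq /F negOK; field.
have G00 y : G0 y != 0 by apply/eqP/G0n.
by rewrite Gam0 !G00.
Qed.

Lemma periodic_products_of_coboundary (Gam H G : Obar O -> K) :
  continuousO Gam -> nonvanishing Gam -> continuousO G -> nonvanishing G ->
  (forall x, H x = Gam x * (G x / G (negO (phi pi S (negO x))))) ->
  continuousO H /\ nonvanishing H /\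
  forall n x, iter n (phi pi S) (negO x) = negO x ->
    \prod_(j < n) Gam (negO (iter j (phi pi S) (negO x))) =
    \prod_(j < n) H (negO (iter j (phi pi S) (negO x))).
Proof.
move=> Gamc Gamn Gc Gn hH; have G0 x : G x != 0 by apply/eqP.
have Hn : nonvanishing H by move=> x; apply/eqP; rewrite hH !mulf_neq0 ?invr_eq0 ?G0 //; apply/eqP.
split; [|split=> // n x hx].
  apply/(continuousO_cont1 Hn); rewrite (functional_extensionality _ _ hH).
  apply: (cont1M closeU_mono); first exact/(continuousO_cont1 Gamn).
  apply: (cont1M closeU_mono); first exact/(continuousO_cont1 Gn).
  apply: (cont1V (f := fun x => G (negO (phi pi S (negO x))))).
  apply: (cont1_negO (f := fun u => G (negO (phi pi S u)))).
  apply: (cont1_phi (f := fun u => G (negO u))).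
  by apply: cont1_negO; apply/(continuousO_cont1 Gn).
under [RHS]eq_bigr do rewrite hH negOK.
rewrite big_split /= prodf_div (@prod_shift_periodic _ (fun j => G (negO (iter j (phi pi S) (negO x)))) n) ?hx //.
rewrite divff ?mulr1 //.
by apply/prodf_neq0 => j _.
Qed.

End Continuity.
End ProductShift.

Unset Implicit Arguments.

Theorem mainTheorem5 (I : finType) (O : I -> localInt)
  (e : I -> nat) (he : forall t, (0 < e t)%N)
  (pi : forall t, O t) (hpi : forall t, pi t = unif (O t) ^+ e t)
  (S : forall t, O t -> Prop)
  (hS : forall t (x : O t), exists s, (S t s /\ dvdR (pi t) (x - s)) /\
          forall s', S t s' /\ dvdR (pi t) (x - s') -> s' = s)
  (R : realType) (K : naField R) (Gam : Obar O -> K)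
  (hGc : continuousO Gam) (hGn : nonvanishing Gam) (H : Obar O -> K) :
  (continuousO H /\ nonvanishing H /\
    forall (n : nat) (x : Obar O),
      iter n (phi pi S) (negO x) = negO x ->
      \prod_(j < n) Gam (negO (iter j (phi pi S) (negO x))) =
      \prod_(j < n) H (negO (iter j (phi pi S) (negO x))))
  <->
  (exists G : Obar O -> K, continuousO G /\ nonvanishing G /\
     forall x : Obar O, H x = Gam x * (G x / G (negO (phi pi S (negO x))))).
Proof.
split=> [[Hc [Hn hper]] | [G [Gc [Gn hH]]]].
  have [G [Gc Gn hH]] := coboundary_of_periodic_products he hpi hS hGc hGn Hc Hn hper.
  by exists G.
exact (periodic_products_of_coboundary he hpi hS hGc hGn Gc Gn hH).
Qed.
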